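(* The automorphism $\mathcal R^{\mathcal W}$ acts on central elements of $\operatorname{Div}(\mathcal W_\xi^{\otimes2})$ by \[ \mathcal R^{\mathcal W}(z_i)=z_i,\quad \mathcal R^{\mathcal W}(x_1^N)=x_1^NG,\quad \mathcal R^{\mathcal W}(x_2^N)=x_2^NG^{-1}, \] \[ \mathcal R^{\mathcal W}(y_1^{-N})=y_2^{-N}+\Big(y_1^{-N}-\frac{y_2^{-N}}{z_2^N}\Big)x_2^{-N},\qquad \mathcal R^{\mathcal W}(y_2^{N})=\frac{z_1^N}{z_2^N}y_1^N+\Big(y_2^N-\frac{y_1^N}{z_2^N}\Big)x_1^N, \] with $G=1+x_1^{-N}\frac{y_1^N}{y_2^N}(x_1^N-z_1^N)(x_2^N-z_2^{-N})$, and the inverse acts by \[ (\mathcal R^{\mathcal W})^{-1}(x_1^N)=x_1^N\tilde G^{-1},\quad (\mathcal R^{\mathcal W})^{-1}(x_2^N)=x_2^N\tilde G, \] \[ (\mathcal R^{\mathcal W})^{-1}(y_1^{-N})=\frac{z_1^N}{z_2^N}y_2^{-N}+(y_1^{-N}-z_1^Ny_2^{-N})x_2^N,\qquad (\mathcal R^{\mathcal W})^{-1}(y_2^N)=y_1^N+(y_2^N-z_1^Ny_1^N)x_1^{-N}, \] with $\tilde G=1+x_2^{-N}\frac{y_1^N}{y_2^N}(x_1^N-z_1^N)(x_2^N-z_2^{-N})$.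
   Context: $N\ge2$, $\xi=e^{\pi i/N}$. $\mathcal W_\xi$ is the $\mathbb C$-algebra generated by invertible $x,y$ and central invertible $z$ with $xy=\xi^2yx$; in $\mathcal W_\xi^{\otimes 2}$ write $x_1=x\otimes 1$, $y_2=1\otimes y$, etc. $\mathcal R^{\mathcal W}$ is the algebra automorphism of the division algebra $\operatorname{Div}(\mathcal W_\xi^{\otimes2})$ given on generators (with $q=\xi$) by $\mathcal R^{\mathcal W}(z_i)=z_i$, $\mathcal R^{\mathcal W}(x_1)=x_1g$, $\mathcal R^{\mathcal W}(x_2)=g^{-1}x_2$, $\mathcal R^{\mathcal W}(y_1^{-1})=y_2^{-1}+(y_1^{-1}-z_2^{-1}y_2^{-1})x_2^{-1}$, $\mathcal R^{\mathcal W}(y_2)=\frac{z_1}{z_2}y_1+(y_2-z_2^{-1}y_1)x_1$, where $g=1-x_1^{-1}y_1(z_1-x_1)y_2^{-1}(x_2-z_2^{-1})$. *)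

From mathcomp Require Import all_boot all_order all_algebra.
From mathcomp Require Import reals trigo.
From mathcomp Require Import complex.
Set Implicit Arguments. Unset Strict Implicit. Unset Printing Implicit Defensive.
Import GRing.Theory Num.Theory.
Local Open Scope ring_scope.
Local Open Scope complex_scope.

(* xi = e^{pi i / N} = cos(pi/N) + i sin(pi/N). *)
Definition xi (R : realType) (N : nat) : R[i] :=
  cos (pi / N%:R) +i* sin (pi / N%:R).

(* exponent vectors of the monomials x1^a y1^b z1^c x2^d y2^e z2^f *)
Definition expo := (int * int * int * int * int * int)%type.

Section W2.
Variables (C : fieldType) (D : unitAlgType C).
Variables (x1 y1 z1 x2 y2 z2 : D).

Definition mono (m : expo) : D :=
  let: (a, b, c, d, e, f) := m in
  x1 ^ a * y1 ^ b * z1 ^ c * x2 ^ d * y2 ^ e * z2 ^ f.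

(* d lies in the image of W_xi^{(x)2}: a finite C-linear combination of monomials *)
Definition inW (d : D) : Prop :=
  exists (s : seq expo) (c : expo -> C), d = \sum_(m <- s) c m *: mono m.

(* Defining relations of W_q^{(x)2} (q-commutation x_i y_i = q^2 y_i x_i,
   all other generators commute, z_i central, all generators invertible). *)
Definition W2_relations (q : C) : Prop :=
  [/\ all (fun w => w \is a GRing.unit) [:: x1; y1; z1; x2; y2; z2],
      x1 * y1 = q ^+ 2 *: (y1 * x1), x2 * y2 = q ^+ 2 *: (y2 * x2),
      [/\ GRing.comm x1 x2, GRing.comm x1 y2, GRing.comm y1 x2 & GRing.comm y1 y2] &
      (forall w, w \in [:: x1; y1; z1; x2; y2; z2] ->
         GRing.comm z1 w /\ GRing.comm z2 w)].

(* No further relations: the ordered monomials are C-linearly independent,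
   i.e. the algebra map W_q^{(x)2} -> D is injective. *)
Definition monomials_free : Prop :=
  forall (s : seq expo) (c : expo -> C), uniq s ->
    \sum_(m <- s) c m *: mono m = 0 -> forall m, m \in s -> c m = 0.

(* D is a division ring which is the (Ore) skew field of fractions of the
   image of W_q^{(x)2}: every element is p s^{-1} with p, s in W. *)
Definition is_Div_W2 (q : C) : Prop :=
  [/\ forall d : D, d != 0 -> d \is a GRing.unit,
      W2_relations q, monomials_free &
      forall d : D, exists p s, [/\ inW p, inW s, s != 0 & d = p / s]].

Definition gW : D := 1 - x1^-1 * y1 * (z1 - x1) * y2^-1 * (x2 - z2^-1).

Definition RW_on_generators (RW : D -> D) : Prop :=
  [/\ RW z1 = z1 /\ RW z2 = z2,
      RW x1 = x1 * gW, RW x2 = gW^-1 * x2,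
      RW (y1^-1) = y2^-1 + (y1^-1 - z2^-1 * y2^-1) * x2^-1 &
      RW y2 = z1 / z2 * y1 + (y2 - z2^-1 * y1) * x1].

Variable N : nat.

Definition GW : D :=
  1 + x1 ^- N * (y1 ^+ N / y2 ^+ N) * (x1 ^+ N - z1 ^+ N) * (x2 ^+ N - z2 ^- N).

Definition GWt : D :=
  1 + x2 ^- N * (y1 ^+ N / y2 ^+ N) * (x1 ^+ N - z1 ^+ N) * (x2 ^+ N - z2 ^- N).

End W2.

(* Put w = q^2, a primitive N-th root of unity.  If v u = w u v, the Gaussian binomials
   [N, k]_w vanish for 0 < k < N, hence (u + v)^N = u^N + v^N, and (-(u v))^N = -(u^N v^N).
   In particular the x_i^N and y_i^N are central, and each of R(x1), R(y1^-1), R(y2) is a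
   sum of two w-commuting terms, so its N-th power is an explicit rational expression in
   x_i^N, y_i^N, z_i^N.  The center of the division ring is a field, on which R restricts
   to a field automorphism; there all remaining identities, including those for R^-1
   (checked by applying R to the claimed right-hand sides), are identities of rational
   functions. *)

From HB Require Import structures.
From mathcomp Require Import all_boot all_order all_algebra.
From mathcomp Require Import reals trigo.
From mathcomp Require Import complex.
From mathcomp Require Import boolp.
From mathcomp Require Import ring zify.
Set Implicit Arguments. Unset Strict Implicit. Unset Printing Implicit Defensive.
Import Order.TTheory GRing.Theory Num.Theory.
Local Open Scope ring_scope.

Section QCommute.
Variables (C : fieldType) (D : algType C).
Implicit Types (w : C) (a b c : D).

Definition qcomm w a b := b * a = w *: (a * b).

Lemma qcomm1P a b : qcomm 1 a b <-> GRing.comm a b.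
Proof. by rewrite /qcomm scale1r; split. Qed.

Lemma qcommMl w w' a b c : qcomm w a c -> qcomm w' b c -> qcomm (w * w') (a * b) c.
Proof.
rewrite /qcomm => ha hb.
by rewrite mulrA ha -scalerAl -[a * c * b]mulrA hb -scalerAr scalerA mulrA.
Qed.

Lemma qcommMr w w' a b c : qcomm w a b -> qcomm w' a c -> qcomm (w * w') a (b * c).
Proof.
rewrite /qcomm => hb hc.
by rewrite -mulrA hc -scalerAr [b * (a * c)]mulrA hb -scalerAl scalerA mulrC mulrA.
Qed.

Lemma comm_qcommMl w a b c : GRing.comm a c -> qcomm w b c -> qcomm w (a * b) c.
Proof. by move=> /qcomm1P ha hb; have := qcommMl ha hb; rewrite mul1r. Qed.

Lemma qcomm_commMl w a b c : qcomm w a c -> GRing.comm b c -> qcomm w (a * b) c.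
Proof. by move=> ha /qcomm1P hb; have := qcommMl ha hb; rewrite mulr1. Qed.

Lemma comm_qcommMr w a b c : GRing.comm a b -> qcomm w a c -> qcomm w a (b * c).
Proof. by move=> /qcomm1P hb hc; have := qcommMr hb hc; rewrite mul1r. Qed.

Lemma qcommNr w a b : qcomm w a b -> qcomm w a (- b).
Proof. by rewrite /qcomm => h; rewrite mulNr mulrN h scalerN. Qed.

Lemma qcommXl w a b n : qcomm w a b -> qcomm (w ^+ n) (a ^+ n) b.
Proof.
move=> h; elim: n => [|n ih]; first by rewrite !expr0; apply/qcomm1P/commr_sym/commr1.
by rewrite !exprS; apply: qcommMl.
Qed.

Lemma qcommXr w a b n : qcomm w a b -> qcomm (w ^+ n) a (b ^+ n).
Proof.
move=> h; elim: n => [|n ih]; first by rewrite !expr0; apply/qcomm1P/commr1.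
by rewrite !exprS; apply: qcommMr.
Qed.

Lemma qcomm_exprM w a b n : qcomm w a b -> (a * b) ^+ n = w ^+ 'C(n, 2) *: (a ^+ n * b ^+ n).
Proof.
move=> h; elim: n => [|n ih]; first by rewrite !expr0 mulr1 scale1r.
rewrite exprSr ih -scalerAl -mulrA [b ^+ n * _]mulrA (qcommXr n h) -scalerAl.
by rewrite -scalerAr scalerA -exprD binS bin1 addnC !mulrA -exprSr -mulrA -exprSr.
Qed.

End QCommute.

Section QCommuteUnit.
Variables (C : fieldType) (D : unitAlgType C).
Implicit Types (w : C) (a b : D).

Lemma qcommVl w a b : w != 0 -> a \is a GRing.unit -> qcomm w a b -> qcomm w^-1 a^-1 b.
Proof.
rewrite /qcomm => w0 ua h.
have -> : a^-1 * b = w *: (b * a^-1).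
  by rewrite -{1}(mulrK ua b) h -scalerAl -scalerAr -[a * b * a^-1]mulrA mulKr.
by rewrite scalerA mulVf // scale1r.
Qed.

Lemma qcommVr w a b : w != 0 -> b \is a GRing.unit -> qcomm w a b -> qcomm w^-1 a b^-1.
Proof.
rewrite /qcomm => w0 ub h.
have -> : a * b^-1 = w *: (b^-1 * a).
  by rewrite -{1}(mulKr ub a) h -scalerAr -scalerAl mulrA mulrK.
by rewrite scalerA mulVf // scale1r.
Qed.

End QCommuteUnit.

Lemma prim_rootV (R : unitRingType) n (z : R) :
  n.-primitive_root z^-1 = n.-primitive_root z.
Proof.
rewrite /primitive_root_of_unity; congr (_ && _); apply: eq_forallb => i.
by rewrite !unity_rootE exprVn invr_eq1.
Qed.

Section PrimitiveRoot.
Variables (C : idomainType) (N : nat) (w : C).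
Hypothesis prim : N.-primitive_root w.

Lemma prim_expr_bin2 : w ^+ 'C(N, 2) = (-1) ^+ N.-1.
Proof.
have N0 := prim_order_gt0 prim.
have [oddN | evenN] := boolP (odd N).
  rewrite bin2odd // exprM (prim_expr_order prim) expr1n.
  by rewrite -signr_odd -(odd_halfK oddN) odd_double.
set m := N./2; have eN : N = m.*2 by rewrite even_halfK.
have wm : w ^+ m = -1.
  have : w ^+ m ^+ 2 == 1 by rewrite -exprM muln2 -eN (prim_expr_order prim).
  by rewrite sqrf_eq1 -(prim_order_dvd prim) gtnNdvd /=; [move/eqP | lia | lia].
by rewrite bin2 {1}eN -doubleMl doubleK exprM wm.
Qed.
End PrimitiveRoot.

Section QBinomial.
Variables (C : fieldType) (D : algType C) (w : C).

Fixpoint qbinom n k : C :=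
  if n is n'.+1 then (if k is k'.+1 then qbinom n' k' else 0) + w ^+ k * qbinom n' k
  else (k == 0)%:R.

Lemma qbinomS n k :
  qbinom n.+1 k = (if k is k'.+1 then qbinom n k' else 0) + w ^+ k * qbinom n k.
Proof. by []. Qed.

Lemma qbinom_small n k : (n < k)%N -> qbinom n k = 0.
Proof.
elim: n k => [|n ih] [|k] //= nk.
by rewrite !ih ?mulr0 ?addr0 // ltnW.
Qed.

Lemma qbinomn0 n : qbinom n 0 = 1.
Proof. by elim: n => //= n ->; rewrite add0r mul1r. Qed.

Lemma qbinomnn n : qbinom n n = 1.
Proof. by elim: n => //= n ->; rewrite qbinom_small // mulr0 addr0. Qed.

Lemma qcomm_exprD_qbinom (u v : D) n : qcomm w u v ->
  (u + v) ^+ n = \sum_(0 <= k < n.+1) qbinom n k *: (u ^+ k * v ^+ (n - k)).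
Proof.
move=> h; elim: n => [|n ih]; first by rewrite big_nat1 /= !expr0 mulr1 scale1r.
rewrite exprS ih mulrDl !mulr_sumr.
under [RHS]eq_bigr do rewrite qbinomS scalerDl.
rewrite big_split /=; congr (_ + _).
  rewrite [RHS]big_nat_recl // scale0r add0r; apply: eq_bigr => k _.
  by rewrite -scalerAr subSS mulrA -exprS.
rewrite [RHS]big_nat_recr //= qbinom_small // mulr0 scale0r addr0.
apply: eq_big_nat => k /andP[_ kn].
by rewrite -scalerAr mulrA (qcommXl k h) -scalerAl scalerA mulrC -mulrA -exprS subSn.
Qed.

Lemma qbinom_prod n k :
  qbinom n k * \prod_(0 <= i < k) (1 - w ^+ i.+1) = \prod_(0 <= i < k) (1 - w ^+ (n - i)).
Proof.
elim: n k => [|n ih] [|k].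
- by rewrite !big_geq // mulr1.
- by rewrite /= mul0r big_nat_recl // subn0 expr0 subrr mul0r.
- by rewrite qbinomn0 !big_geq // mulr1.
rewrite /= mulrDl -mulrA ih [X in qbinom n k * X]big_nat_recr //= mulrA ih.
rewrite [X in _ + _ * X]big_nat_recr //= big_nat_recl //= subn0.
under [X in _ = _ * X]eq_bigr do rewrite subSS.
set Q := \prod_(0 <= i < k) _.
have [kn | nk] := leqP k n.
  have e : w ^+ k.+1 * w ^+ (n - k) = w ^+ n.+1 by rewrite -exprD addSn subnKC.
  rewrite -e; ring.
have -> : Q = 0.
  apply/eqP; rewrite prodf_seq_eq0; apply/seq.hasP; exists n; first by rewrite mem_index_iota.
  by rewrite subnn expr0 subrr eqxx.
by rewrite !(mul0r, mulr0, addr0).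
Qed.

Section Primitive.
Variable N : nat.
Hypothesis prim : N.-primitive_root w.

Lemma qbinom_prim_eq0 k : (0 < k < N)%N -> qbinom N k = 0.
Proof.
case: k => // k /andP[_ kN]; have := qbinom_prod N k.+1.
rewrite [RHS]big_nat_recl // subn0 (prim_expr_order prim) subrr mul0r.
move/eqP; rewrite mulf_eq0 prodf_seq_eq0 => /orP[/eqP //|].
case/seq.hasP => i; rewrite mem_index_iota subr_eq0 eq_sym -(prim_order_dvd prim) => /andP[_ ik].
by rewrite gtnNdvd //; apply: leq_ltn_trans kN.
Qed.

Lemma qcomm_exprD (u v : D) : qcomm w u v -> (u + v) ^+ N = u ^+ N + v ^+ N.
Proof.
move=> h; rewrite (qcomm_exprD_qbinom N h).
have N0 := prim_order_gt0 prim; rewrite -(prednK N0).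
rewrite big_nat_recl // big_nat_recr // prednK // qbinomn0 qbinomnn subn0 subnn !expr0.
rewrite mul1r mulr1 !scale1r big_nat_cond big1 => [|k]; first by rewrite /= add0r addrC.
by rewrite andbT => /andP[_ kN]; rewrite qbinom_prim_eq0 ?scale0r // -(prednK N0) ltnS.
Qed.

Lemma qcomm_commXl (a b : D) : qcomm w a b -> GRing.comm (a ^+ N) b.
Proof. by move/(qcommXl N); rewrite (prim_expr_order prim) => /qcomm1P. Qed.

Lemma qcomm_commXr (a b : D) : qcomm w a b -> GRing.comm a (b ^+ N).
Proof. by move/(qcommXr N); rewrite (prim_expr_order prim) => /qcomm1P. Qed.

Lemma qcomm_exprNM (a b : D) : qcomm w a b -> (- (a * b)) ^+ N = - (a ^+ N * b ^+ N).
Proof.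
move=> h; have N0 := prim_order_gt0 prim.
rewrite exprNn (qcomm_exprM N h) (prim_expr_bin2 prim).
rewrite -[(-1) ^+ N.-1 : C]signr_odd scaler_sign -signr_odd mulr_sign.
by rewrite -[in odd N](prednK N0) oddS; case: (odd N.-1); rewrite ?opprK.
Qed.

Lemma qcomm_exprMB (a b c : D) : qcomm w a b -> GRing.comm c a -> GRing.comm c b ->
  (a * (c - b)) ^+ N = a ^+ N * (c ^+ N - b ^+ N).
Proof.
move=> hab hca hcb.
have hac : GRing.comm a c by apply/commr_sym.
have h : qcomm w (a * c) (- (a * b)).
  apply/qcommNr/comm_qcommMr; first exact/commr_sym/commrM.
  exact: qcomm_commMl.
by rewrite mulrBr (qcomm_exprD h) (qcomm_exprNM hab) (exprMn_comm _ hac) mulrBr.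
Qed.

End Primitive.
End QBinomial.

Section Center.
Variable D : unitRingType.

Definition central (d : D) : bool := `[< forall e : D, GRing.comm d e >].

Lemma centralP d : reflect (forall e, GRing.comm d e) (central d).
Proof. exact: asboolP. Qed.

Lemma central_divring_closed : divring_closed central.
Proof.
split=> [|a b /centralP ca /centralP cb|a b /centralP ca /centralP cb];
  apply/centralP => e; apply/commr_sym.
- exact: commr1.
- by apply: commrB; apply/commr_sym.
- by apply: commrM; [apply/commr_sym | apply/commrV/commr_sym].
Qed.

End Center.

HB.instance Definition _ (D : unitRingType) :=
  GRing.isDivringClosed.Build D (@central D) (@central_divring_closed D).

Definition center_field (D : unitRingType)
  (_ : forall d : D, d != 0 -> d \is a GRing.unit) := {d : D | central d}.

Section CenterField.
Variables (D : unitRingType) (divD : forall d : D, d != 0 -> d \is a GRing.unit).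
HB.instance Definition _ := [isSub for (@sval D (@central D)) : center_field divD -> D].
HB.instance Definition _ := [Choice of center_field divD by <:].
HB.instance Definition _ := [SubChoice_isSubNzRing of center_field divD by <:].
End CenterField.

Lemma center_mulC (D : unitRingType) divD : commutative (@GRing.mul (@center_field D divD)).
Proof. by move=> a b; apply: val_inj; rewrite !rmorphM; apply/centralP/valP. Qed.

HB.instance Definition _ D divD :=
  GRing.PzRing_hasCommutativeMul.Build (@center_field D divD) (@center_mulC D divD).
HB.instance Definition _ D divD := [SubNzRing_isSubUnitRing of @center_field D divD by <:].

Lemma center_field_axiom (D : unitRingType) divD : GRing.field_axiom (@center_field D divD).
Proof.
move=> e e0; have : val e != 0.
  by apply: contra e0 => /eqP e0; apply/eqP/val_inj; rewrite e0 rmorph0.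
exact: divD.
Qed.

HB.instance Definition _ D divD :=
  GRing.ComUnitRing_isField.Build (@center_field D divD) (@center_field_axiom D divD).

Section CenterVal.
Variables (D : unitRingType) (divD : forall d : D, d != 0 -> d \is a GRing.unit).
Implicit Types e f : center_field divD.

Lemma center_val1 : val (1 : center_field divD) = 1. Proof. exact: rmorph1. Qed.
Lemma center_valD e f : val (e + f) = val e + val f. Proof. exact: rmorphD. Qed.
Lemma center_valB e f : val (e - f) = val e - val f. Proof. exact: rmorphB. Qed.
Lemma center_valM e f : val (e * f) = val e * val f. Proof. exact: rmorphM. Qed.

Lemma center_valV e : val e^-1 = (val e)^-1.
Proof.
have [->|e0] := eqVneq e 0; first by rewrite invr0 rmorph0 invr0.
by rewrite rmorphV // unitfE.
Qed.

End CenterVal.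

Local Open Scope complex_scope.

Section Xi.
Variables (R : realType) (N : nat).
Hypothesis N0 : (0 < N)%N.

Lemma xi_expr n : xi R N ^+ n = cos (pi / N%:R *+ n) +i* sin (pi / N%:R *+ n).
Proof.
elim: n => [|n ih]; first by rewrite expr0 mulr0n cos0 sin0.
rewrite exprS ih mulrS cosD sinD; apply/eqP.
by rewrite eq_complex /= eqxx /= addrC eqxx.
Qed.

Lemma pi_divN_mulN : pi / N%:R *+ N = pi :> R.
Proof. by rewrite -mulr_natr divfK // pnatr_eq0 -lt0n. Qed.

Lemma xi_exprN : xi R N ^+ N = -1.
Proof.
rewrite xi_expr pi_divN_mulN cospi sinpi; apply/eqP.
by rewrite eq_complex /= !eqxx oppr0 eqxx.
Qed.

Lemma xi2_prim : N.-primitive_root (xi R N ^+ 2).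
Proof.
have zN : xi R N ^+ 2 ^+ N = 1 by rewrite exprAC xi_exprN sqrrN expr1n.
have [m pm mN] := prim_order_exists N0 zN.
suff e : N = m by rewrite {1}e.
have m0 := prim_order_gt0 pm.
apply/eqP; rewrite eqn_leq (dvdn_leq N0 mN) andbT leqNgt; apply/negP => lt_mN.
have : 0 < sin (pi / N%:R *+ m) :> R.
  apply: sin_gt0_pi; rewrite pmulrn_lgt0 ?divr_gt0 ?pi_gt0 ?ltr0n //=.
  by rewrite -[X in _ < X]pi_divN_mulN ltr_pMn2l ?divr_gt0 ?pi_gt0 ?ltr0n.
have : xi R N ^+ m ^+ 2 == 1 by rewrite -exprM mulnC exprM (prim_expr_order pm).
by rewrite sqrf_eq1 xi_expr => /orP[] /eqP /(congr1 (@complex.Im R)) /= ->;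
  rewrite ?oppr0 ltxx.
Qed.

End Xi.

Local Close Scope complex_scope.

Section RationalIdentities.
Variables (F : fieldType) (X1 Y1 X2 Y2 a b : F).
Local Notation G := (1 + X1^-1 * (Y1 / Y2) * (X1 - a) * (X2 - b^-1)).
Local Notation A := (Y2^-1 + (Y1^-1 - Y2^-1 / b) * X2^-1).
Local Notation B := (a / b * Y1 + (Y2 - Y1 / b) * X1).
Hypotheses (X1_neq0 : X1 != 0) (X2_neq0 : X2 != 0) (Y1_neq0 : Y1 != 0) (Y2_neq0 : Y2 != 0)
  (b_neq0 : b != 0).

Lemma G_expansion : Y1 * (a - X1) * (Y2^-1 * (b^-1 - X2)) + X1 = X1 * G.
Proof. by field; do ?[apply/andP; split]. Qed.

Lemma A_expansion : Y2^-1 * (1 - b^-1 * X2^-1) + Y1^-1 * X2^-1 = A.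
Proof. by field; do ?[apply/andP; split]. Qed.

Lemma B_expansion : b^-1 * Y1 * (a - X1) + Y2 * X1 = B.
Proof. by field; do ?[apply/andP; split]. Qed.

Hypotheses (G_neq0 : G != 0) (A_neq0 : A != 0) (B_neq0 : B != 0).

(* [field] needs the numerators of G, A and B to be nonzero. *)
Let G_num_neq0 : X1 * Y2 * b + Y1 * (X1 - a) * (X2 * b - 1) != 0.
Proof.
have e : G = (X1 * Y2 * b + Y1 * (X1 - a) * (X2 * b - 1)) / (X1 * Y2 * b).
  by field; do ?[apply/andP; split].
by apply: contraNneq G_neq0 => h; rewrite e h mul0r.
Qed.

Let A_num_neq0 : Y1 * b * X2 + (Y2 * b + -1 * Y1) != 0.
Proof.
have e : A = (Y1 * b * X2 + (Y2 * b + -1 * Y1)) / (Y1 * Y2 * b * X2).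
  by field; do ?[apply/andP; split].
by apply: contraNneq A_neq0 => h; rewrite e h mul0r.
Qed.

Let B_num_neq0 : a * Y1 + (Y2 * b - Y1) * X1 != 0.
Proof.
have e : B = (a * Y1 + (Y2 * b - Y1) * X1) / b by field.
by apply: contraNneq B_neq0 => h; rewrite e h mul0r.
Qed.

Lemma Gt_image : 1 + (X2 / G)^-1 * (A^-1 / B) * (X1 * G - a) * (X2 / G - b^-1) = G.
Proof. by field; do ?[apply/andP; split]. Qed.

Lemma y1V_preimage : a / b * B^-1 + (A - a * B^-1) * (X2 / G) = Y1^-1.
Proof. by field; do ?[apply/andP; split]. Qed.

Lemma y2_preimage : A^-1 + (B - a * A^-1) * (X1 * G)^-1 = Y2.
Proof. by field; do ?[apply/andP; split]. Qed.

End RationalIdentities.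

Section Generators.
Variables (C : fieldType) (D : unitAlgType C) (q : C) (N : nat).
Variables (x1 y1 z1 x2 y2 z2 : D).
Hypothesis prim : N.-primitive_root (q ^+ 2).
Hypothesis hD : is_Div_W2 x1 y1 z1 x2 y2 z2 q.

Local Notation w := (q ^+ 2).

Lemma primV : N.-primitive_root w^-1.
Proof. by rewrite prim_rootV. Qed.

Lemma divD (d : D) : d != 0 -> d \is a GRing.unit.
Proof. by case: hD => unitD _ _ _; apply: unitD. Qed.

Lemma unit_gen g : g \in [:: x1; y1; z1; x2; y2; z2] -> g \is a GRing.unit.
Proof. by case: hD => _ [/allP hu _ _ _ _] _ _; apply: hu. Qed.

Ltac gen_unit := by apply: unit_gen; rewrite !inE eqxx ?orbT.

Lemma qcomm_y1x1 : qcomm w y1 x1. Proof. by case: hD => _ []. Qed.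
Lemma qcomm_y2x2 : qcomm w y2 x2. Proof. by case: hD => _ []. Qed.

Lemma w_neq0 : w != 0.
Proof. by rewrite (prim_root_eq0 prim) -lt0n (prim_order_gt0 prim). Qed.

Lemma qcomm_y2Vx2 : qcomm w^-1 y2^-1 x2.
Proof. by apply: qcommVl w_neq0 _ qcomm_y2x2; gen_unit. Qed.

Lemma qcomm_y2Vx2V : qcomm w y2^-1 x2^-1.
Proof.
rewrite -[w]invrK; apply: qcommVr qcomm_y2Vx2; last by gen_unit.
by rewrite invr_eq0 w_neq0.
Qed.

Lemma comm_x1x2 : GRing.comm x1 x2. Proof. by case: hD => _ [_ _ _ []]. Qed.
Lemma comm_x1y2 : GRing.comm x1 y2. Proof. by case: hD => _ [_ _ _ []]. Qed.
Lemma comm_y1x2 : GRing.comm y1 x2. Proof. by case: hD => _ [_ _ _ []]. Qed.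
Lemma comm_y1y2 : GRing.comm y1 y2. Proof. by case: hD => _ [_ _ _ []]. Qed.

Lemma central_of_comm_gens d :
  GRing.comm d x1 -> GRing.comm d y1 -> GRing.comm d z1 ->
  GRing.comm d x2 -> GRing.comm d y2 -> GRing.comm d z2 -> central d.
Proof.
move=> cx1 cy1 cz1 cx2 cy2 cz2.
have commW p : inW x1 y1 z1 x2 y2 z2 p -> GRing.comm d p.
  case=> s [c ->]; apply: commr_sum => -[[[[[a b] c'] d'] e] f] _.
  have cm : GRing.comm d (mono x1 y1 z1 x2 y2 z2 (a, b, c', d', e, f)).
    by rewrite /mono; do !apply: commrM; apply: commrXz.
  by rewrite /GRing.comm -scalerAr -scalerAl cm.
apply/centralP => e; case: hD => _ _ _ /(_ e) [p [s [pW sW _ ->]]].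
by apply: commrM; [apply: commW | apply/commrV/commW].
Qed.

Lemma central_z1 : central z1.
Proof.
have [_ [_ _ _ _ cz] _ _] := hD.
by apply: central_of_comm_gens; apply: (proj1 (cz _ _)); rewrite !inE eqxx ?orbT.
Qed.

Lemma central_z2 : central z2.
Proof.
have [_ [_ _ _ _ cz] _ _] := hD.
by apply: central_of_comm_gens; apply: (proj2 (cz _ _)); rewrite !inE eqxx ?orbT.
Qed.

Lemma comm_z1 e : GRing.comm z1 e. Proof. exact/centralP/central_z1. Qed.
Lemma comm_z2 e : GRing.comm z2 e. Proof. exact/centralP/central_z2. Qed.

Lemma comm_z2V e : GRing.comm z2^-1 e.
Proof. exact/commr_sym/commrV/commr_sym/comm_z2. Qed.

Ltac commute :=
  repeat match goal with
  | |- GRing.comm ?a ?a => apply: commr_refl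
  | |- GRing.comm _ (_ * _) => apply: commrM
  | |- GRing.comm _ (_ + _) => apply: commrD
  | |- GRing.comm _ (- _) => apply: commrN
  | |- GRing.comm _ (_ ^-1) => apply: commrV
  | |- GRing.comm _ (_ ^+ _) => apply: commrX
  | |- GRing.comm _ 1 => apply: commr1
  | |- GRing.comm z1 _ => exact: comm_z1
  | |- GRing.comm z2 _ => exact: comm_z2
  | |- GRing.comm x1 x2 => exact: comm_x1x2
  | |- GRing.comm x1 y2 => exact: comm_x1y2
  | |- GRing.comm y1 x2 => exact: comm_y1x2
  | |- GRing.comm y1 y2 => exact: comm_y1y2
  | |- GRing.comm _ z1 => apply/commr_sym
  | |- GRing.comm _ z2 => apply/commr_sym
  | |- GRing.comm x2 x1 => apply/commr_sym
  | |- GRing.comm y2 x1 => apply/commr_sym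
  | |- GRing.comm x2 y1 => apply/commr_sym
  | |- GRing.comm y2 y1 => apply/commr_sym
  | |- GRing.comm (_ _) _ => apply/commr_sym
  end.

Lemma central_x1N : central (x1 ^+ N).
Proof.
apply: central_of_comm_gens; try by commute.
exact/commr_sym/(qcomm_commXr prim qcomm_y1x1).
Qed.

Lemma central_y1N : central (y1 ^+ N).
Proof.
apply: central_of_comm_gens; try by commute.
exact: (qcomm_commXl prim qcomm_y1x1).
Qed.

Lemma central_x2N : central (x2 ^+ N).
Proof.
apply: central_of_comm_gens; try by commute.
exact/commr_sym/(qcomm_commXr prim qcomm_y2x2).
Qed.

Lemma central_y2N : central (y2 ^+ N).
Proof.
apply: central_of_comm_gens; try by commute.
exact: (qcomm_commXl prim qcomm_y2x2).
Qed.

Lemma central_z1N : central (z1 ^+ N). Proof. exact/rpredX/central_z1. Qed.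
Lemma central_z2N : central (z2 ^+ N). Proof. exact/rpredX/central_z2. Qed.

Local Notation Z := (center_field divD).

Definition X1 : Z := Sub (x1 ^+ N) central_x1N.
Definition Y1 : Z := Sub (y1 ^+ N) central_y1N.
Definition X2 : Z := Sub (x2 ^+ N) central_x2N.
Definition Y2 : Z := Sub (y2 ^+ N) central_y2N.
Definition Z1 : Z := Sub (z1 ^+ N) central_z1N.
Definition Z2 : Z := Sub (z2 ^+ N) central_z2N.

Lemma val_X1 : val X1 = x1 ^+ N. Proof. exact: SubK. Qed.
Lemma val_Y1 : val Y1 = y1 ^+ N. Proof. exact: SubK. Qed.
Lemma val_X2 : val X2 = x2 ^+ N. Proof. exact: SubK. Qed.
Lemma val_Y2 : val Y2 = y2 ^+ N. Proof. exact: SubK. Qed.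
Lemma val_Z1 : val Z1 = z1 ^+ N. Proof. exact: SubK. Qed.
Lemma val_Z2 : val Z2 = z2 ^+ N. Proof. exact: SubK. Qed.

Lemma unit_val_neq0 (e : Z) : val e \is a GRing.unit -> e != 0.
Proof. by apply: contraTneq => ->; rewrite rmorph0 unitr0. Qed.

Lemma X1_neq0 : X1 != 0.
Proof. by apply: unit_val_neq0; rewrite val_X1; apply/unitrX; gen_unit. Qed.
Lemma Y1_neq0 : Y1 != 0.
Proof. by apply: unit_val_neq0; rewrite val_Y1; apply/unitrX; gen_unit. Qed.
Lemma X2_neq0 : X2 != 0.
Proof. by apply: unit_val_neq0; rewrite val_X2; apply/unitrX; gen_unit. Qed.
Lemma Y2_neq0 : Y2 != 0.
Proof. by apply: unit_val_neq0; rewrite val_Y2; apply/unitrX; gen_unit. Qed.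
Lemma Z2_neq0 : Z2 != 0.
Proof. by apply: unit_val_neq0; rewrite val_Z2; apply/unitrX; gen_unit. Qed.

Ltac nonzero := rewrite ?X1_neq0 ?Y1_neq0 ?X2_neq0 ?Y2_neq0 ?Z2_neq0.

Definition GZ : Z := 1 + X1^-1 * (Y1 / Y2) * (X1 - Z1) * (X2 - Z2^-1).
Definition GtZ : Z := 1 + X2^-1 * (Y1 / Y2) * (X1 - Z1) * (X2 - Z2^-1).
Definition AZ : Z := Y2^-1 + (Y1^-1 - Y2^-1 / Z2) * X2^-1.
Definition BZ : Z := Z1 / Z2 * Y1 + (Y2 - Y1 / Z2) * X1.

Ltac push_val := rewrite ?(center_valD, center_valB, center_valM, center_val1,
  center_valV, val_X1, val_Y1, val_X2, val_Y2, val_Z1, val_Z2).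

Lemma val_GZ : val GZ = GW x1 y1 z1 x2 y2 z2 N. Proof. by rewrite /GZ; push_val. Qed.
Lemma val_GtZ : val GtZ = GWt x1 y1 z1 x2 y2 z2 N. Proof. by rewrite /GtZ; push_val. Qed.

Section Automorphism.
Variables (RW : {rmorphism D -> D}) (RWinv : D -> D).
Hypotheses (RWK : cancel RW RWinv) (RWinvK : cancel RWinv RW).
Hypothesis hRW : RW_on_generators x1 y1 z1 x2 y2 z2 RW.

Lemma RW_x1N_expand :
  RW (x1 ^+ N) = y1 ^+ N * (z1 ^+ N - x1 ^+ N) * (y2 ^- N * (z2 ^- N - x2 ^+ N)) + x1 ^+ N.
Proof.
have [_ RWx1 _ _ _] := hRW.
have ux1 : x1 \is a GRing.unit by gen_unit.
rewrite rmorphXn RWx1.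
have -> : x1 * gW x1 y1 z1 x2 y2 z2 = y1 * (z1 - x1) * (y2^-1 * (z2^-1 - x2)) + x1.
  rewrite /gW mulrBr mulr1 !mulrA mulrV // mul1r addrC; congr (_ + _).
  by rewrite -mulrN opprB.
have h : qcomm w (y1 * (z1 - x1) * (y2^-1 * (z2^-1 - x2))) x1.
  by apply: qcomm_commMl; [apply: qcomm_commMl; [exact: qcomm_y1x1|] |]; commute.
rewrite (qcomm_exprD prim h) exprMn_comm; last by commute.
rewrite (qcomm_exprMB prim qcomm_y1x1) ?(qcomm_exprMB primV qcomm_y2Vx2); try by commute.
by rewrite !exprVn.
Qed.

Lemma RW_y1VN_expand :
  RW (y1 ^- N) = y2 ^- N * (1 - z2 ^- N * x2 ^- N) + y1 ^- N * x2 ^- N.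
Proof.
have [_ _ _ RWy1V _] := hRW.
rewrite -exprVn rmorphXn RWy1V.
have -> : y2^-1 + (y1^-1 - z2^-1 * y2^-1) * x2^-1 =
          y2^-1 * (1 - z2^-1 * x2^-1) + y1^-1 * x2^-1.
  by rewrite mulrBl mulrBr mulr1 addrA addrAC (comm_z2V y2^-1) mulrA.
have h : qcomm w (y2^-1 * (1 - z2^-1 * x2^-1)) (y1^-1 * x2^-1).
  apply: comm_qcommMr; first by commute.
  by apply: qcomm_commMl; [exact: qcomm_y2Vx2V | commute].
have hy2 : qcomm w y2^-1 (z2^-1 * x2^-1) by apply: comm_qcommMr qcomm_y2Vx2V; commute.
rewrite (qcomm_exprD prim h) (qcomm_exprMB prim hy2) ?expr1n; try by commute.
by rewrite !exprMn_comm ?exprVn //; commute.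
Qed.

Lemma RW_y2N_expand :
  RW (y2 ^+ N) = z2 ^- N * y1 ^+ N * (z1 ^+ N - x1 ^+ N) + y2 ^+ N * x1 ^+ N.
Proof.
have [_ _ _ _ RWy2] := hRW.
rewrite rmorphXn RWy2.
have -> : z1 / z2 * y1 + (y2 - z2^-1 * y1) * x1 = z2^-1 * y1 * (z1 - x1) + y2 * x1.
  by rewrite mulrBl mulrBr addrA addrAC -mulrA (comm_z1 (z2^-1 * y1)).
have hy : qcomm w (z2^-1 * y1) x1 by apply: comm_qcommMl qcomm_y1x1; commute.
have h : qcomm w (z2^-1 * y1 * (z1 - x1)) (y2 * x1).
  by apply: comm_qcommMr; [|apply: qcomm_commMl hy _]; commute.
rewrite (qcomm_exprD prim h) (qcomm_exprMB prim hy); try by commute.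
by rewrite !exprMn_comm ?exprVn //; commute.
Qed.

Lemma RW_x1x2 : RW (x1 * x2) = x1 * x2.
Proof.
have [_ RWx1 RWx2 _ _] := hRW.
have ug : gW x1 y1 z1 x2 y2 z2 \is a GRing.unit.
  have : RW x1 \is a GRing.unit by apply: rmorph_unit; gen_unit.
  by rewrite RWx1 unitrMr //; gen_unit.
by rewrite rmorphM RWx1 RWx2 mulrA mulrK.
Qed.

Lemma RW_central d : central d -> central (RW d).
Proof.
move=> /centralP cd; apply/centralP => e.
by rewrite -[e]RWinvK /GRing.comm -!rmorphM cd.
Qed.

Definition RWc (e : Z) : Z := Sub (RW (val e)) (RW_central (valP e)).

Lemma val_RWc e : val (RWc e) = RW (val e). Proof. exact: SubK. Qed.

Lemma RWc_is_zmod_morphism : {morph RWc : a b / a - b}.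
Proof. by move=> a b; apply: val_inj; rewrite !(val_RWc, center_valB) rmorphB. Qed.

Lemma RWc_is_monoid_morphism : GRing.monoid_morphism RWc.
Proof.
split=> [|a b]; apply: val_inj; rewrite val_RWc.
  by rewrite center_val1 rmorph1.
by rewrite !center_valM rmorphM !val_RWc.
Qed.

HB.instance Definition _ := GRing.isZmodMorphism.Build Z Z RWc RWc_is_zmod_morphism.
HB.instance Definition _ := GRing.isMonoidMorphism.Build Z Z RWc RWc_is_monoid_morphism.

Lemma RWc_X1 : RWc X1 = X1 * GZ.
Proof.
suff -> : RWc X1 = Y1 * (Z1 - X1) * (Y2^-1 * (Z2^-1 - X2)) + X1.
  by apply: G_expansion; nonzero.
by apply: val_inj; rewrite val_RWc val_X1 RW_x1N_expand; push_val.
Qed.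

Lemma RWc_Y1V : RWc Y1^-1 = AZ.
Proof.
suff -> : RWc Y1^-1 = Y2^-1 * (1 - Z2^-1 * X2^-1) + Y1^-1 * X2^-1.
  by apply: A_expansion; nonzero.
by apply: val_inj; rewrite val_RWc center_valV val_Y1 RW_y1VN_expand; push_val.
Qed.

Lemma RWc_Y1 : RWc Y1 = AZ^-1.
Proof. by rewrite -RWc_Y1V -fmorphV invrK. Qed.

Lemma RWc_Y2 : RWc Y2 = BZ.
Proof.
suff -> : RWc Y2 = Z2^-1 * Y1 * (Z1 - X1) + Y2 * X1.
  by apply: B_expansion; nonzero.
by apply: val_inj; rewrite val_RWc val_Y2 RW_y2N_expand; push_val.
Qed.

Lemma RWc_Z1 : RWc Z1 = Z1.
Proof.
have [[RWz1 _] _ _ _ _] := hRW.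
by apply: val_inj; rewrite val_RWc val_Z1 rmorphXn RWz1.
Qed.

Lemma RWc_Z2 : RWc Z2 = Z2.
Proof.
have [[_ RWz2] _ _ _ _] := hRW.
by apply: val_inj; rewrite val_RWc val_Z2 rmorphXn RWz2.
Qed.

Lemma RWc_neq0 e : e != 0 -> RWc e != 0.
Proof. by rewrite fmorph_eq0. Qed.

Lemma GZ_neq0 : GZ != 0.
Proof. by have := RWc_neq0 X1_neq0; rewrite RWc_X1 mulf_eq0 negb_or => /andP[]. Qed.

Lemma AZ_neq0 : AZ != 0.
Proof. by have := RWc_neq0 Y1_neq0; rewrite RWc_Y1 invr_eq0. Qed.

Lemma BZ_neq0 : BZ != 0.
Proof. by have := RWc_neq0 Y2_neq0; rewrite RWc_Y2. Qed.

Lemma RWc_X2 : RWc X2 = X2 / GZ.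
Proof.
have : RWc (X1 * X2) = X1 * X2.
  apply: val_inj; rewrite val_RWc center_valM val_X1 val_X2 -exprMn_comm; last by commute.
  by rewrite rmorphXn RW_x1x2.
rewrite rmorphM /= RWc_X1 -mulrA => /(mulfI X1_neq0) e.
by apply: (mulfI GZ_neq0); rewrite e mulrCA divff ?mulr1 ?GZ_neq0.
Qed.

Lemma RWc_GtZ : RWc GtZ = GZ.
Proof.
rewrite /GtZ !(rmorphD, rmorphN, rmorphM, rmorph1, fmorphV) /=.
rewrite RWc_X1 RWc_X2 RWc_Y1 RWc_Y2 RWc_Z1 RWc_Z2.
by apply: Gt_image; nonzero; rewrite ?GZ_neq0 ?AZ_neq0 ?BZ_neq0.
Qed.

Lemma RW_x1N : RW (x1 ^+ N) = x1 ^+ N * GW x1 y1 z1 x2 y2 z2 N.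
Proof. by rewrite -val_X1 -val_GZ -center_valM -RWc_X1 val_RWc. Qed.

Lemma RW_x2N : RW (x2 ^+ N) = x2 ^+ N * (GW x1 y1 z1 x2 y2 z2 N)^-1.
Proof. by rewrite -val_X2 -val_GZ -center_valV -center_valM -RWc_X2 val_RWc. Qed.

Lemma RW_y1VN : RW (y1 ^- N) = y2 ^- N + (y1 ^- N - y2 ^- N / z2 ^+ N) * x2 ^- N.
Proof.
have -> : y2 ^- N + (y1 ^- N - y2 ^- N / z2 ^+ N) * x2 ^- N = val AZ.
  by rewrite /AZ; push_val.
by rewrite -RWc_Y1V val_RWc center_valV val_Y1.
Qed.

Lemma RW_y2N : RW (y2 ^+ N) =
  z1 ^+ N / z2 ^+ N * y1 ^+ N + (y2 ^+ N - y1 ^+ N / z2 ^+ N) * x1 ^+ N.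
Proof.
have -> : z1 ^+ N / z2 ^+ N * y1 ^+ N + (y2 ^+ N - y1 ^+ N / z2 ^+ N) * x1 ^+ N = val BZ.
  by rewrite /BZ; push_val.
by rewrite -RWc_Y2 val_RWc val_Y2.
Qed.

Lemma RWinv_val e e' : RWc e' = e -> RWinv (val e) = val e'.
Proof. by move=> <-; rewrite val_RWc RWK. Qed.

Lemma RWinv_x1N : RWinv (x1 ^+ N) = x1 ^+ N * (GWt x1 y1 z1 x2 y2 z2 N)^-1.
Proof.
rewrite -val_X1 -val_GtZ -center_valV -center_valM; apply: RWinv_val.
by rewrite rmorphM fmorphV /= RWc_GtZ RWc_X1 mulfK // GZ_neq0.
Qed.

Lemma RWinv_x2N : RWinv (x2 ^+ N) = x2 ^+ N * GWt x1 y1 z1 x2 y2 z2 N.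
Proof.
rewrite -val_X2 -val_GtZ -center_valM; apply: RWinv_val.
by rewrite rmorphM /= RWc_GtZ RWc_X2 divfK // GZ_neq0.
Qed.

Lemma RWinv_y1VN : RWinv (y1 ^- N) =
  z1 ^+ N / z2 ^+ N * y2 ^- N + (y1 ^- N - z1 ^+ N * y2 ^- N) * x2 ^+ N.
Proof.
have -> : z1 ^+ N / z2 ^+ N * y2 ^- N + (y1 ^- N - z1 ^+ N * y2 ^- N) * x2 ^+ N =
          val (Z1 / Z2 * Y2^-1 + (Y1^-1 - Z1 * Y2^-1) * X2) by push_val.
rewrite -val_Y1 -center_valV; apply: RWinv_val.
rewrite !(rmorphD, rmorphN, rmorphM, fmorphV) /= RWc_X2 RWc_Y1 RWc_Y2 RWc_Z1 RWc_Z2 invrK.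
by apply: y1V_preimage; nonzero; rewrite ?GZ_neq0 ?AZ_neq0 ?BZ_neq0.
Qed.

Lemma RWinv_y2N : RWinv (y2 ^+ N) = y1 ^+ N + (y2 ^+ N - z1 ^+ N * y1 ^+ N) * x1 ^- N.
Proof.
have -> : y1 ^+ N + (y2 ^+ N - z1 ^+ N * y1 ^+ N) * x1 ^- N =
          val (Y1 + (Y2 - Z1 * Y1) * X1^-1) by push_val.
rewrite -val_Y2; apply: RWinv_val.
rewrite !(rmorphD, rmorphN, rmorphM, fmorphV) /= RWc_X1 RWc_Y1 RWc_Y2 RWc_Z1.
by apply: y2_preimage; nonzero; rewrite ?GZ_neq0 ?AZ_neq0 ?BZ_neq0.
Qed.

End Automorphism.

End Generators.

Local Open Scope complex_scope.

Theorem proposition3p3 (R : realType) (N : nat) (hN : (2 <= N)%N)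
    (D : unitAlgType R[i]) (x1 y1 z1 x2 y2 z2 : D)
    (hD : is_Div_W2 x1 y1 z1 x2 y2 z2 (xi R N))
    (RW : {lrmorphism D -> D}) (RWinv : D -> D)
    (hRl : cancel RW RWinv) (hRr : cancel RWinv RW)
    (hRW : RW_on_generators x1 y1 z1 x2 y2 z2 RW) :
  let G := GW x1 y1 z1 x2 y2 z2 N in
  let Gt := GWt x1 y1 z1 x2 y2 z2 N in
  RW z1 = z1 /\ RW z2 = z2/\
      RW (x1 ^+ N) = x1 ^+ N * G/\
      RW (x2 ^+ N) = x2 ^+ N * G^-1/\
      RW (y1 ^- N) = y2 ^- N + (y1 ^- N - y2 ^- N / z2 ^+ N) * x2 ^- N/\
      RW (y2 ^+ N) = z1 ^+ N / z2 ^+ N * y1 ^+ N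
                     + (y2 ^+ N - y1 ^+ N / z2 ^+ N) * x1 ^+ N/\
      RWinv (x1 ^+ N) = x1 ^+ N * Gt^-1/\
      RWinv (x2 ^+ N) = x2 ^+ N * Gt/\
      RWinv (y1 ^- N) = z1 ^+ N / z2 ^+ N * y2 ^- N
                        + (y1 ^- N - z1 ^+ N * y2 ^- N) * x2 ^+ N /\
      RWinv (y2 ^+ N) = y1 ^+ N + (y2 ^+ N - z1 ^+ N * y1 ^+ N) * x1 ^- N.
Proof.
move=> G Gt; have prim := xi2_prim R (ltnW hN).
have [[RWz1 RWz2] _ _ _ _] := hRW.
do 2!split=> //.
split; first exact: (RW_x1N (RW := RW) prim hD hRr hRW).
split; first exact: (RW_x2N (RW := RW) prim hD hRr hRW).
split; first exact: (RW_y1VN (RW := RW) prim hD hRr hRW).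
split; first exact: (RW_y2N (RW := RW) prim hD hRr hRW).
split; first exact: (RWinv_x1N (RW := RW) prim hD hRl hRr hRW).
split; first exact: (RWinv_x2N (RW := RW) prim hD hRl hRr hRW).
split; first exact: (RWinv_y1VN (RW := RW) prim hD hRl hRr hRW).
exact: (RWinv_y2N (RW := RW) prim hD hRl hRr hRW).
Qed.
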